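(* Let $M,N$ be indecomposable non-projective $A_n^\ell$-modules. If $\underline{\mathrm{Hom}}(M,N)=0$ and $\underline{\mathrm{Hom}}(N,M)=0$, then $\mathrm{top}(M)\not\cong\mathrm{top}(N)$ and $\mathrm{soc}(M)\not\cong\mathrm{soc}(N)$.
   Context: $A_n^\ell=kQ/I$ ($k$ algebraically closed), $Q$ the cyclic quiver with vertices $1,\dots,n$ and arrows $i\to i+1$, $n\to 1$, $I$ generated by all paths of length $\ell+1$. $\underline{\mathrm{Hom}}$ denotes Hom modulo morphisms factoring through projective modules. *)

(* Finite-dimensional representations of the cyclic quiver
   Q (vertices 'I_n, arrows i -> ordS i) bound by all paths of length l+1,
   i.e. finite-dimensional modules over A_n^l = kQ/I.
   Vectors are row vectors: the arrow i -> i+1 acts by right multiplication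
   with a matrix of size (dim i) x (dim (i+1)). *)
From HB Require Import structures.
From mathcomp Require Import all_boot all_order all_algebra.
Set Implicit Arguments. Unset Strict Implicit. Unset Printing Implicit Defensive.
Import GRing.Theory.
Local Open Scope ring_scope.

Section Reps.
Variables (k : fieldType) (n : nat).

Record rep := Rep {
  rdim : 'I_n -> nat;
  rarr : forall i : 'I_n, 'M[k]_(rdim i, rdim (ordS i)) }.

Fixpoint pathmx (M : rep) (i : 'I_n) (m : nat) :
    'M[k]_(rdim M i, rdim M (iter m (@ordS n) i)) :=
  match m with
  | 0 => 1%:M
  | m'.+1 => pathmx M i m' *m rarr M (iter m' (@ordS n) i)
  end.

Definition bound (l : nat) (M : rep) : Prop :=
  forall i : 'I_n, pathmx M i l.+1 = 0.

Definition is_hom (M N : rep) (f : forall i, 'M[k]_(rdim M i, rdim N i)) : Prop :=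
  forall i : 'I_n, rarr M i *m f (ordS i) = f i *m rarr N i.

Record hom (M N : rep) := Hom {
  homf :> forall i, 'M[k]_(rdim M i, rdim N i);
  homP : is_hom homf }.

(* g \o f, written as composition of the families f then g *)
Definition compf (M N L : rep) (f : forall i, 'M[k]_(rdim M i, rdim N i))
  (g : forall i, 'M[k]_(rdim N i, rdim L i)) : forall i, 'M[k]_(rdim M i, rdim L i) :=
  fun i => f i *m g i.

Definition idf (M : rep) : forall i, 'M[k]_(rdim M i, rdim M i) := fun i => 1%:M.

Definition iso (M N : rep) : Prop :=
  exists (f : hom M N) (g : hom N M),
    (forall i, compf f g i = idf M i) /\ (forall i, compf g f i = idf N i).

Definition surj_hom (M N : rep) (f : hom M N) : Prop :=
  forall i, \rank (f i) = rdim N i.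

Definition zero_rep (M : rep) : Prop := forall i, rdim M i = 0%N.

Definition dsum (X Y : rep) : rep :=
  @Rep (fun i => (rdim X i + rdim Y i)%N)
       (fun i => block_mx (rarr X i) 0 0 (rarr Y i)).

Definition indecomposable (M : rep) : Prop :=
  ~ zero_rep M /\
  forall X Y : rep, iso M (dsum X Y) -> zero_rep X \/ zero_rep Y.

Definition projective (l : nat) (P : rep) : Prop :=
  forall (X Y : rep), bound l X -> bound l Y ->
  forall (g : hom X Y), surj_hom g ->
  forall (h : hom P Y), exists h' : hom P X, forall i, compf h' g i = h i.

(* \underline{Hom}(M,N) = 0 : every morphism M -> N factors through a
   projective A_n^l-module *)
Definition stable_hom_zero (l : nat) (M N : rep) : Prop :=
  forall f : hom M N, exists (P : rep) (a : hom M P) (b : hom P N),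
    bound l P /\ projective l P /\ forall i, compf a b i = f i.

(* top(M) = M / rad M.  rad M at vertex i is the image of the arrow
   ord_pred i -> i, so top(M)_i has dimension dim M_i - rank(arrow into i);
   all arrows of M/rad M are zero (arrows land in rad M). *)
Definition top (M : rep) : rep :=
  @Rep (fun i => (rdim M i - \rank (rarr M (ord_pred i)))%N) (fun i => 0).

(* soc(M) : at vertex i the kernel of the arrow i -> i+1, of dimension
   dim M_i - rank(arrow out of i); the arrows restricted to soc are zero. *)
Definition soc (M : rep) : rep :=
  @Rep (fun i => (rdim M i - \rank (rarr M i))%N) (fun i => 0).

End Reps.

From Pilot Require Import Defs.
From HB Require Import structures.
From mathcomp Require Import all_boot all_order all_algebra.
From mathcomp Require Import zify.
Set Implicit Arguments. Unset Strict Implicit. Unset Printing Implicit Defensive.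
Import GRing.Theory.
Local Open Scope ring_scope.

(* An indecomposable A_n^l-module M is uniserial.  Let h+1 be its Loewy length
   and p in M_i a vector with p * (path of length h) <> 0, ending at s = i + h.
   A functional psi on M_s dual to the path images of p defines an endomorphism
   of M factoring through the uniserial module U of length h+1 with top at i
   and sending p to p; it is idempotent and nonzero, hence the identity, so
   M = U: top(M) is simple at i, soc(M) is simple at s, and M is projective
   when h = l.  For non-projective M, N we thus have h_M, h_N < l.
   If top M = top N and h_M <= h_N, the morphism N -> M sending the generator
   to the generator factors through a projective P; in P everything killed by
   the paths of length l lies in the radical, which pushes the generator of M
   into rad M.  Dually, if soc M = soc N and h_M <= h_N, the morphism M -> N
   that is injective on the socle factors through P, where the socle lies in
   the image of the paths of length l, and these vanish in N. *)

Lemma notsub_functional (k : fieldType) d m (S : 'M[k]_(m, d)) (u : 'rV[k]_d) : ~~ (u <= S)%MS ->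
  exists phi : 'cV[k]_d, S *m phi = 0 /\ u *m phi = 1%:M.
Proof.
rewrite submxE => c0; set c := u *m cokermx S in c0.
have [j cj] : exists j, c 0 j != 0.
  apply/existsP; apply: contraR c0 => /existsPn c_0.
  by apply/eqP/rowP => j; rewrite [RHS]mxE; apply/eqP/negPn.
exists ((c 0 j)^-1 *: col j (cokermx S)); split.
  by rewrite -scalemxAr colE mulmxA mulmx_coker mul0mx scaler0.
rewrite -scalemxAr colE mulmxA -/c -colE.
by apply/matrixP => a b; rewrite !ord1 [LHS]mxE [col _ _ _ _]mxE [RHS]mxE mulVf.
Qed.

HB.lock Definition idem_base (k : fieldType) d (E : 'M[k]_d) : 'M[k]_(\rank E, d) :=
  row_base E.
HB.lock Definition idem_sec (k : fieldType) d (E : 'M[k]_d) : 'M[k]_(d, \rank E) :=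
  E *m pinvmx (row_base E).

Section Idempotent.
Variables (k : fieldType) (d : nat) (E : 'M[k]_d).
Hypothesis idemE : E *m E = E.

Lemma idem_sec_base : idem_sec E *m idem_base E = E.
Proof. by rewrite idem_sec.unlock idem_base.unlock mulmxKpV // eq_row_base. Qed.

Lemma idem_base_idem : idem_base E *m E = idem_base E.
Proof.
rewrite idem_base.unlock; have /submxP[D ->] : (row_base E <= E)%MS by rewrite eq_row_base.
by rewrite -mulmxA idemE.
Qed.

Lemma idem_base_sec : idem_base E *m idem_sec E = 1%:M.
Proof.
rewrite idem_sec.unlock mulmxA idem_base_idem idem_base.unlock mulmxVp //.
exact: row_base_free.
Qed.

Lemma idem_idem_sec : E *m idem_sec E = idem_sec E.
Proof. by rewrite idem_sec.unlock mulmxA idemE. Qed.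

Lemma idem_base_sec_orth (F : 'M[k]_d) : E *m F = 0 -> idem_base E *m idem_sec F = 0.
Proof.
move=> EF0; rewrite -idem_base_idem idem_sec.unlock -mulmxA (mulmxA E) EF0.
by rewrite mul0mx mulmx0.
Qed.

Lemma idem_compl : (1%:M - E) *m (1%:M - E) = 1%:M - E.
Proof. by rewrite mulmxBl mul1mx mulmxBr mulmx1 idemE subrr subr0. Qed.

End Idempotent.

Section ShiftMatrix.
Variables (k : fieldType) (l : nat).

Definition shift_mx : 'M[k]_l.+1 := \matrix_(a, b) ((b : nat) == a.+1)%:R.

Lemma shift_mx_pow (z : 'rV[k]_l.+1) m b :
  (z *m shift_mx ^+ m) 0 b = if (m <= b)%N then z 0 (inord (b - m)) else 0.
Proof.
elim: m b => [|m IH] b; first by rewrite expr0 mulmx1 subn0 inord_val.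
rewrite exprSr mulmxA mxE; case: b => [[|b] lt_b] /=.
  by apply: big1 => a _; rewrite [shift_mx _ _]mxE mulr0.
have lt_bl : (b < l.+1)%N by rewrite ltnW.
rewrite (bigD1 (inord b)) //= big1 ?addr0 => [|a ne_a].
  by rewrite [shift_mx _ _]mxE inordK // eqxx mulr1 IH inordK // ltnS subSS.
rewrite [shift_mx _ _]mxE eqSS; suff /negbTE-> : (b != a) by rewrite mulr0.
by apply: contra ne_a => /eqP ->; rewrite inord_val.
Qed.

Lemma shift_mx_nilp : shift_mx ^+ l.+1 = 0.
Proof.
apply/row_matrixP => r; rewrite row0 rowE; apply/rowP => b.
by rewrite shift_mx_pow [RHS]mxE ltnNge -ltnS ltn_ord.
Qed.

Lemma shift_mx_pow_last (z : 'rV[k]_l.+1) : (z *m shift_mx ^+ l) 0 ord_max = z 0 0.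
Proof. by rewrite shift_mx_pow leqnn subnn; congr (z 0 _); apply/val_inj; rewrite /= inordK. Qed.

End ShiftMatrix.

Notation vshift m := (iter m (@ordS _)).

Lemma vshift_inj n m : injective (vshift m : 'I_n -> 'I_n).
Proof. by elim: m => [//|m IH] a b /= /ordS_inj /IH. Qed.

Section VertexCast.
Variables (k : fieldType) (n : nat).

(* [vcast d a b] is the identity if [a = b] and 0 otherwise: it lets [arr M a b]
   and [pth M a b m] below be defined for every target vertex [b], vanishing
   unless [b] is the end of the arrow, resp. of the path of length [m]. *)
Definition vcast (d : 'I_n -> nat) (a b : 'I_n) : 'M[k]_(d a, d b) :=
  if a =P b is ReflectT e then castmx (erefl, congr1 d e) 1%:M else 0.

Lemma vcast_id d a : vcast d a a = 1%:M.
Proof. by rewrite /vcast; case: eqP => // e; rewrite (eq_irrelevance e erefl) castmx_id. Qed.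

Lemma vcast_neq d a b : a != b -> vcast d a b = 0.
Proof. by rewrite /vcast; case: eqP. Qed.

Lemma vcast_natural (d1 d2 : 'I_n -> nat) (F : forall j, 'M[k]_(d1 j, d2 j)) a b :
  vcast d1 a b *m F b = F a *m vcast d2 a b.
Proof.
have [<-|ne] := eqVneq a b; first by rewrite !vcast_id mul1mx mulmx1.
by rewrite !vcast_neq // mul0mx mulmx0.
Qed.

End VertexCast.

HB.lock Definition arr (k : fieldType) n (M : rep k n) (a b : 'I_n)
    : 'M[k]_(rdim M a, rdim M b) :=
  rarr M a *m vcast k (rdim M) (ordS a) b.

HB.lock Definition pth (k : fieldType) n (M : rep k n) (a b : 'I_n) m
    : 'M[k]_(rdim M a, rdim M b) :=
  pathmx M a m *m vcast k (rdim M) (vshift m a) b.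

Section Paths.
Variables (k : fieldType) (n : nat).
Implicit Types (M N : rep k n) (a b c j : 'I_n).
Local Notation vcast := (vcast k).

Lemma arrE M a b : arr M a b = rarr M a *m vcast (rdim M) (ordS a) b.
Proof. by rewrite arr.unlock. Qed.

Lemma pthE M a b m : pth M a b m = pathmx M a m *m vcast (rdim M) (vshift m a) b.
Proof. by rewrite pth.unlock. Qed.

Lemma arr_succ M a : arr M a (ordS a) = rarr M a.
Proof. by rewrite arrE vcast_id mulmx1. Qed.

Lemma mxrank_arr M a b : ordS a = b -> \rank (arr M a b) = \rank (rarr M a).
Proof. by move=> <-; rewrite arr_succ. Qed.

Lemma arr_neq M a b : a != ord_pred b -> arr M a b = 0.
Proof.
move=> ne; rewrite arrE vcast_neq ?mulmx0 //.
by apply: contra ne => /eqP <-; rewrite ordSK.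
Qed.

Lemma pth0 M a b : pth M a b 0 = vcast (rdim M) a b.
Proof. by rewrite pthE mul1mx. Qed.

Lemma pth_neq M a b m : vshift m a != b -> pth M a b m = 0.
Proof. by move=> ne; rewrite pthE vcast_neq // mulmx0. Qed.

Lemma pthS M a c m : pth M a c m.+1 = pth M a (vshift m a) m *m arr M (vshift m a) c.
Proof. by rewrite !pthE arrE vcast_id mulmx1 /= mulmxA. Qed.

Lemma pth1 M a c : pth M a c 1 = arr M a c.
Proof. by rewrite pthS pth0 vcast_id mul1mx. Qed.

Lemma pth_cat M a b c m m' : vshift m a = b ->
  pth M a b m *m pth M b c m' = pth M a c (m + m').
Proof.
move=> eb; elim: m' c => [|m' IH] c.
  by rewrite addn0 pth0 !pthE -mulmxA -eb vcast_id mul1mx.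
by rewrite addnS pthS mulmxA IH pthS -eb -iterD addnC.
Qed.

Lemma pthSl M a c m : pth M a c m.+1 = arr M a (ordS a) *m pth M (ordS a) c m.
Proof. by rewrite -pth1 pth_cat. Qed.

Lemma pth_arr M a b m : pth M a b m *m rarr M b = pth M a (ordS b) m.+1.
Proof.
have [<-|ne] := eqVneq (vshift m a) b; first by rewrite pthS arr_succ.
by rewrite pth_neq // mul0mx pth_neq //= (inj_eq (@ordS_inj n)).
Qed.

Lemma pthSr M a b m : pth M a b m.+1 = pth M a (ord_pred b) m *m arr M (ord_pred b) b.
Proof.
have [<-|ne] := eqVneq (vshift m a) (ord_pred b); first by rewrite pthS.
rewrite [pth _ _ (ord_pred b) _]pth_neq // mul0mx pth_neq //=.
by apply: contra ne => /eqP <-; rewrite ordSK.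
Qed.

Lemma hom_arr M N (f : Defs.hom M N) a b : f a *m arr N a b = arr M a b *m f b.
Proof. by rewrite !arrE -mulmxA vcast_natural mulmxA -(Defs.homP f) mulmxA. Qed.

Lemma hom_pth M N (f : Defs.hom M N) a b m : f a *m pth N a b m = pth M a b m *m f b.
Proof.
elim: m b => [|m IH] b; first by rewrite !pth0 (vcast_natural f).
by rewrite !pthS mulmxA IH -mulmxA hom_arr mulmxA.
Qed.

Lemma pth_loewy M h : (forall a, pathmx M a h = 0) ->
  forall a b m, (h <= m)%N -> pth M a b m = 0.
Proof.
move=> loewyM a b m /subnKC <-; elim: (m - h)%N b => [|d IH] b.
  by rewrite addn0 pthE loewyM mul0mx.
by rewrite addnS pthS IH mul0mx.
Qed.

Lemma pth_annih_mono M j (u : 'rV[k]_(rdim M j)) m m' : (m <= m')%N ->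
  (forall b, u *m pth M j b m = 0) -> forall b, u *m pth M j b m' = 0.
Proof.
move=> /subnKC <- u_kill; elim: (m' - m)%N => [|d IH] b; first by rewrite addn0.
by rewrite addnS pthS mulmxA IH mul0mx.
Qed.

End Paths.

Section Representations.
Variables (k : fieldType) (n : nat).
Implicit Types (M N X Y : rep k n).

Lemma comp_is_hom M N X (f : Defs.hom M N) (g : Defs.hom N X) : is_hom (compf f g).
Proof. by move=> j; rewrite /compf mulmxA (Defs.homP f) -mulmxA (Defs.homP g) mulmxA. Qed.

Lemma iso_rdim M N : iso M N -> forall j, rdim M j = rdim N j.
Proof.
move=> [f [g [fg gf]]] j; move: (fg j) (gf j); rewrite /compf /idf => fg1 gf1.
apply/eqP; rewrite eqn_leq -{1}(mxrank1 k (rdim M j)) -fg1 -{3}(mxrank1 k (rdim N j)) -gf1.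
by rewrite !(leq_trans (mxrankM_maxl _ _)) ?rank_leq_col.
Qed.

Lemma row_mx_is_hom M X Y (f : Defs.hom M X) (g : Defs.hom M Y) :
  is_hom (N := dsum X Y) (fun j => row_mx (f j) (g j)).
Proof.
move=> j; rewrite /= mul_mx_row mul_row_block !mulmx0 addr0 add0r.
by rewrite !Defs.homP.
Qed.

Lemma col_mx_is_hom X Y N (f : Defs.hom X N) (g : Defs.hom Y N) :
  is_hom (M := dsum X Y) (fun j => col_mx (f j) (g j)).
Proof.
move=> j; rewrite /= mul_col_mx !mul_row_col !mul0mx addr0 add0r mul_col_mx.
by rewrite !Defs.homP.
Qed.

Definition image_rep M (E : forall j, 'M[k]_(rdim M j)) : rep k n :=
  @Rep k n (fun j => \rank (E j))
    (fun j => idem_base (E j) *m rarr M j *m idem_sec (E (ordS j))).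

Section ImageRep.
Variables (M : rep k n) (E : forall j, 'M[k]_(rdim M j)).
Hypotheses (idemE : forall j, E j *m E j = E j) (homE : is_hom E).

Lemma idem_sec_is_hom : is_hom (N := image_rep E) (fun j => idem_sec (E j)).
Proof. by move=> j; rewrite /= !mulmxA idem_sec_base // -homE -mulmxA idem_idem_sec. Qed.

Lemma idem_base_is_hom : is_hom (M := image_rep E) (fun j => idem_base (E j)).
Proof. by move=> j; rewrite /= -mulmxA idem_sec_base // -mulmxA homE mulmxA idem_base_idem. Qed.

End ImageRep.

Lemma idem_compl_is_hom M (E : forall j, 'M[k]_(rdim M j)) :
  is_hom E -> is_hom (fun j => 1%:M - E j).
Proof. by move=> homE j; rewrite mulmxBr mulmxBl mulmx1 mul1mx homE. Qed.

Lemma idem_split M (E : forall j, 'M[k]_(rdim M j)) :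
  (forall j, E j *m E j = E j) -> is_hom E ->
  iso M (dsum (image_rep E) (image_rep (fun j => 1%:M - E j))).
Proof.
move=> idemE homE.
pose Ec j : 'M[k]_(rdim M j) := 1%:M - E j.
have idemEc j : Ec j *m Ec j = Ec j by exact: idem_compl.
have homEc : is_hom Ec by exact: idem_compl_is_hom.
have orthE j : E j *m Ec j = 0 by rewrite mulmxBr mulmx1 idemE subrr.
have orthEc j : Ec j *m E j = 0 by rewrite mulmxBl mul1mx idemE subrr.
pose sec E' idemE' homE' := Defs.Hom (@idem_sec_is_hom M E' idemE' homE').
pose base E' idemE' homE' := Defs.Hom (@idem_base_is_hom M E' idemE' homE').
exists (Defs.Hom (row_mx_is_hom (sec _ idemE homE) (sec _ idemEc homEc))).
exists (Defs.Hom (col_mx_is_hom (base _ idemE homE) (base _ idemEc homEc))).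
split=> j; rewrite /compf /=.
  by rewrite mul_row_col !idem_sec_base // addrC subrK.
rewrite mul_col_row !idem_base_sec // !idem_base_sec_orth //.
by rewrite -scalar_mx_block.
Qed.

Lemma indecomposable_idem M (e : Defs.hom M M) : indecomposable M ->
  (forall j, e j *m e j = e j) -> (forall j, e j = 0) \/ (forall j, e j = 1%:M).
Proof.
move=> [_ indM] idem_e.
have [] := indM _ _ (idem_split idem_e (Defs.homP e)) => zero_im; [left|right] => j;
  move/eqP: (zero_im j); rewrite mxrank_eq0 => /eqP //.
by move/eqP; rewrite subr_eq0 eq_sym => /eqP.
Qed.

End Representations.

Section Generator.
Variables (k : fieldType) (n : nat) (M : rep k n) (h : nat) (i : 'I_n).
Variable p : 'rV[k]_(rdim M i).
Hypothesis loewyM : forall a, pathmx M a h.+1 = 0.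
Local Notation s := (vshift h i).
Hypothesis p_top : p *m pth M i s h != 0.

Lemma gen_pth_free (c : 'I_h.+1 -> k) :
  \sum_(t < h.+1) c t *: (p *m pth M i s t) = 0 -> c ord_max = 0.
Proof.
apply: contra_eq => cmax.
pose P t := (c t != 0) && (vshift t i == s).
have Pmax : P ord_max by rewrite /P cmax eqxx.
case: (arg_minnP (fun t : 'I_h.+1 => val t) Pmax) => t0 /andP[ct0 /eqP st0] min_t0.
(* a path of length h - t0 kills every term of the sum but the t0-th one *)
apply: contraNneq (p_top) => /(congr1 (mulmx^~ (pth M s s (h - t0)))).
rewrite mul0mx mulmx_suml (bigD1 t0) //= big1 => [|t ne_t].
  rewrite addr0 -scalemxAl -mulmxA pth_cat // subnKC; last by rewrite -ltnS.
  by move/eqP; rewrite scaler_eq0 (negbTE ct0).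
rewrite -scalemxAl -mulmxA.
have [st|] := eqVneq (vshift t i) s; last by move/pth_neq ->; rewrite mul0mx mulmx0 scaler0.
have [lt_t|] := ltnP t t0.
  suff -> : c t = 0 by rewrite scale0r.
  by apply/eqP; apply: contraTT lt_t => ct; rewrite -leqNgt min_t0 // /P ct st eqxx.
rewrite leq_eqVlt => /predU1P[/val_inj eq_t|gt_t]; first by rewrite eq_t eqxx in ne_t.
rewrite pth_cat // (pth_loewy loewyM) ?mulmx0 ?scaler0 //.
by have := ltn_ord t0; lia.
Qed.

Lemma dual_functional : exists psi : 'cV[k]_(rdim M s),
  forall t, (t <= h)%N -> p *m pth M i s t *m psi = (t == h)%:R%:M.
Proof.
pose S := \matrix_(t < h) (p *m pth M i s t).
have top_notin_S : ~~ (p *m pth M i s h <= S)%MS.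
  apply/negP => /submxP[D top_eq].
  pose c (t : 'I_h.+1) := if unlift ord_max t is Some t' then D 0 t' else -1.
  suff /gen_pth_free : \sum_(t < h.+1) c t *: (p *m pth M i s t) = 0.
    by rewrite /c unlift_none => /eqP; rewrite oppr_eq0 oner_eq0.
  rewrite big_ord_recr /= /c unlift_none top_eq mulmx_sum_row scaleN1r.
  apply/eqP; rewrite subr_eq0; apply/eqP/eq_bigr => t _.
  have -> : widen_ord (leqnSn h) t = lift ord_max t by exact/val_inj/esym/lift_max.
  by rewrite liftK rowK.
have [psi [S_psi top_psi]] := notsub_functional top_notin_S.
exists psi => t; rewrite leq_eqVlt => /predU1P[->|lt_th]; first by rewrite eqxx top_psi.
have -> : p *m pth M i s t = row (Ordinal lt_th) S by rewrite rowK.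
by rewrite ltn_eqF // -row_mul S_psi row0 raddf0.
Qed.

End Generator.

Section UniserialMorphism.
Variables (k : fieldType) (n : nat).
Implicit Types (M N Y : rep k n).

(* The composite M -> U -> N through the uniserial module U of Loewy length h+1
   with top at i: psi reads off the coordinates in U of a vector of M, and the
   t-th basis vector of U is sent to q times the paths of length t. *)
Definition uni_mx M N h i (psi : 'cV[k]_(rdim M (vshift h i))) (q : 'rV[k]_(rdim N i)) j
    : 'M[k]_(rdim M j, rdim N j) :=
  \sum_(t < h.+1) (pth M j (vshift h i) (h - t) *m psi) *m (q *m pth N i j t).

Lemma uni_mx_is_hom M N h i psi q :
  (forall a, pathmx M a h.+1 = 0) -> (forall b, q *m pth N i b h.+1 = 0) ->
  is_hom (@uni_mx M N h i psi q).
Proof.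
move=> loewyM q_loewy j; rewrite /uni_mx mulmx_sumr mulmx_suml.
rewrite big_ord_recl big_ord_recr /= subn0 !mulmxA -[rarr M j]arr_succ -pthSl.
rewrite (pth_loewy loewyM) // !mul0mx add0r -!mulmxA pth_arr q_loewy !mulmx0 addr0.
apply: eq_bigr => t _; rewrite !mulmxA -pthSl -!mulmxA pth_arr.
by rewrite /bump /= add1n subnSK.
Qed.

Lemma uni_mx_gen M N h i psi (p : 'rV[k]_(rdim M i)) q :
  (forall t, (t <= h)%N -> p *m pth M i (vshift h i) t *m psi = (t == h)%:R%:M) ->
  p *m @uni_mx M N h i psi q i = q.
Proof.
move=> dual_psi; rewrite /uni_mx mulmx_sumr big_ord_recl big1 ?addr0.
  by rewrite !mulmxA dual_psi ?subn0 // eqxx mul1mx pth0 vcast_id mulmx1.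
move=> t _; rewrite !mulmxA dual_psi ?leq_subr // lift0.
suff -> : (h - t.+1 == h)%N = false by rewrite raddf0 !mul0mx.
by apply/negbTE; have := ltn_ord t; lia.
Qed.

Lemma uni_mx_comp M N Y h i psi q (F : Defs.hom N Y) j :
  @uni_mx M N h i psi q j *m F j = uni_mx psi (q *m F i) j.
Proof.
rewrite /uni_mx mulmx_suml; apply: eq_bigr => t _.
by rewrite -!mulmxA hom_pth !mulmxA.
Qed.

End UniserialMorphism.

Section UniserialData.
Variables (k : fieldType) (n : nat).
Implicit Types (M : rep k n).

(* [psi] is dual to the path images of the generator [p]; [ud_unit] says that
   M -> U -> M is the identity, i.e. M is the uniserial module U. *)
Record uniserial_data M h i (p : 'rV[k]_(rdim M i)) (psi : 'cV[k]_(rdim M (vshift h i)))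
    : Prop := UniserialData {
  ud_loewy : forall a, pathmx M a h.+1 = 0;
  ud_dual : forall t, (t <= h)%N -> p *m pth M i (vshift h i) t *m psi = (t == h)%:R%:M;
  ud_unit : forall j, uni_mx psi p j = 1%:M }.

Lemma loewy_length_exists l M : bound l M -> ~ zero_rep M ->
  exists h i, (forall a, pathmx M a h.+1 = 0) /\ pathmx M i h != 0.
Proof.
move=> boundM nzM.
have ex_h : exists h, [forall a, pathmx M a h.+1 == 0].
  by exists l; apply/forallP => a; rewrite boundM.
case: (ex_minnP ex_h) => h /forallP loewy min_h.
exists h; suff [i Mi] : exists i, pathmx M i h != 0 by exists i; split=> // a; apply/eqP.
apply/existsP; apply: contraT => /existsPn Mi0.
case: h loewy min_h Mi0 => [|h] _ min_h Mi0.
  case: nzM => j; have /negPn/eqP one0 := Mi0 j.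
  by rewrite -(mxrank1 k (rdim M j)) (one0 : 1%:M = 0) mxrank0.
suff : (h < h)%N by rewrite ltnn.
by apply: min_h; apply/forallP => a; apply/negPn/Mi0.
Qed.

Lemma uniserial_data_exists l M : bound l M -> indecomposable M ->
  exists h i (p : 'rV[k]_(rdim M i)) (psi : 'cV[k]_(rdim M (vshift h i))),
    uniserial_data p psi.
Proof.
move=> boundM indM.
have [h [i [loewyM Mi]]] := loewy_length_exists boundM indM.1.
have [r Mr] : exists r, row r (pathmx M i h) != 0.
  apply/existsP; apply: contraNT Mi => /existsPn Mr0.
  by apply/eqP/row_matrixP => r; rewrite row0; apply/eqP/negPn.
pose p : 'rV[k]_(rdim M i) := delta_mx 0 r.
have p_top : p *m pth M i (vshift h i) h != 0 by rewrite pthE vcast_id mulmx1 -rowE.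
have [psi dual_psi] := dual_functional loewyM p_top.
have p_loewy b : p *m pth M i b h.+1 = 0 by rewrite (pth_loewy loewyM) ?mulmx0.
pose e := Defs.Hom (uni_mx_is_hom psi loewyM p_loewy).
have idem_e j : e j *m e j = e j by rewrite [X in X *m _]/= uni_mx_comp uni_mx_gen.
exists h, i, p, psi; split=> //.
have [e0|//] := indecomposable_idem indM idem_e.
have : p *m e i = p by exact: uni_mx_gen.
by rewrite e0 mulmx0 => p0; move: p_top; rewrite -p0 !mul0mx eqxx.
Qed.

End UniserialData.

Section UniserialProperties.
Variables (k : fieldType) (n : nat) (M : rep k n) (h : nat) (i : 'I_n).
Variables (p : 'rV[k]_(rdim M i)) (psi : 'cV[k]_(rdim M (vshift h i))).
Hypothesis udM : uniserial_data p psi.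
Local Notation s := (vshift h i).

Lemma ud_top : p *m pth M i s h != 0.
Proof.
apply/eqP => top0; have := ud_dual udM (leqnn h).
by rewrite top0 mul0mx eqxx => /matrixP/(_ 0 0)/eqP; rewrite !mxE eq_sym oner_eq0.
Qed.

Lemma ud_hom_uni_mx Y (F : Defs.hom M Y) j : F j = uni_mx psi (p *m F i) j.
Proof. by rewrite -uni_mx_comp ud_unit // mul1mx. Qed.

Lemma ud_hom_unique Y (F G : Defs.hom M Y) : p *m F i = p *m G i -> forall j, F j = G j.
Proof. by move=> FG j; rewrite ud_hom_uni_mx FG -ud_hom_uni_mx. Qed.

Lemma ud_gen_notin_rad : ~~ (p <= arr M (ord_pred i) i)%MS.
Proof.
apply: contra ud_top => /submxP[Z ->].
rewrite -mulmxA -pth1 pth_cat; last exact: ord_predK.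
by rewrite (pth_loewy (ud_loewy udM)) ?mulmx0.
Qed.

Lemma ud_top_support j : (rdim (top M) j != 0)%N = (j == i).
Proof.
rewrite /= subn_eq0 -ltnNge; have [->|ne_ji] := eqVneq j i.
  rewrite ltnNge; apply: contra ud_gen_notin_rad => full_arr; apply/submx_full.
  by rewrite /row_full (mxrank_arr _ (ord_predK i)) eqn_leq full_arr
    -(mxrank_arr _ (ord_predK i)) rank_leq_col.
apply: negbTE; rewrite -leqNgt -(mxrank1 k (rdim M j)) -(ud_unit udM j).
rewrite -(mxrank_arr M (ord_predK j)) /uni_mx big_ord_recl pth0 vcast_neq 1?eq_sym //.
rewrite !mulmx0 add0r; under eq_bigr do rewrite pthSr !mulmxA.
by rewrite -mulmx_suml mxrankM_maxr.
Qed.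

Lemma ud_soc_support j : (rdim (soc M) j != 0)%N = (j == s).
Proof.
rewrite /= subn_eq0 -ltnNge; have [->|ne_js] := eqVneq j s.
  rewrite ltnNge; apply: contra ud_top => le_rank.
  have free_arr : row_free (rarr M s) by rewrite /row_free eqn_leq le_rank rank_leq_row.
  by rewrite -(mulmx_free_eq0 _ free_arr) -mulmxA pth_arr (pth_loewy (ud_loewy udM)) ?mulmx0.
apply: negbTE; rewrite -leqNgt; suff /eqP-> : row_free (rarr M j) by [].
apply/row_freeP; rewrite -(ud_unit udM j) /uni_mx big_ord_recr /= subnn pth0.
rewrite vcast_neq // !mul0mx addr0.
exists (\sum_(t < h) pth M (ordS j) s (h - t.+1) *m psi *m (p *m pth M i j t)).
by rewrite mulmx_sumr; apply: eq_bigr => t _; rewrite -(subnSK (ltn_ord t)) pthSl arr_succ !mulmxA.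
Qed.

Lemma ud_projective l : (l <= h)%N -> projective l M.
Proof.
move=> le_lh X Y boundX _ g surj_g f.
have [B Bg] : exists B, B *m g i = 1%:M by apply/row_fullP; rewrite /row_full surj_g.
pose x := p *m f i *m B.
have x_loewy b : x *m pth X i b h.+1 = 0 by rewrite (pth_loewy boundX) ?mulmx0 // ltnS.
pose F := Defs.Hom (uni_mx_is_hom psi (ud_loewy udM) x_loewy).
exists F; apply: (@ud_hom_unique _ (Defs.Hom (comp_is_hom F g)) f).
rewrite /= /compf mulmxA uni_mx_gen; last exact: ud_dual udM.
by rewrite /x -mulmxA Bg mulmx1.
Qed.

End UniserialProperties.

Section Projective.
Variables (k : fieldType) (n l : nat) (P : rep k n).
Hypothesis projP : projective l P.

Lemma proj_rad c (u : 'rV[k]_(rdim P c)) :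
  (forall b, u *m pth P c b l = 0) -> (u <= arr P (ord_pred c) c)%MS.
Proof.
(* X is k[x]/(x^(l+1)) at every vertex, every arrow acting by x, and Y is k at
   every vertex with zero arrows.  Lifting the map P -> Y given by phi at c
   along the constant-term map X -> Y sends u to some z with z_0 = 1, whereas
   z x^l = 0 since u is killed by the paths of length l. *)
move=> u_l; apply: contraT => u_notin_rad.
have [phi [rad_phi u_phi]] := notsub_functional u_notin_rad.
pose X := @Rep k n (fun _ => l.+1) (fun _ => shift_mx k l).
pose Y := @Rep k n (fun _ => 1%N) (fun _ => 0).
have pathX a m : pathmx X a m = shift_mx k l ^+ m.
  by elim: m => [|m IH]; rewrite ?expr0 // /= IH exprSr.
have boundX : bound l X by move=> a; rewrite pathX shift_mx_nilp.
have boundY : bound l Y by move=> a /=; rewrite mulmx0.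
pose g (j : 'I_n) : 'M[k]_(rdim X j, rdim Y j) := delta_mx 0 0.
have homg : is_hom g.
  by move=> j; rewrite /g /= mulmx0 -colE; apply/matrixP => a b; rewrite !mxE.
have surj_g : surj_hom (Defs.Hom homg) by move=> j; rewrite /= mxrank_delta.
pose f (j : 'I_n) : 'M[k]_(rdim P j, rdim Y j) := vcast k (rdim P) j c *m phi.
have homf : is_hom f.
  move=> a; rewrite /f /= mulmx0 mulmxA -arrE.
  have [->|ne_a] := eqVneq a (ord_pred c); first by rewrite rad_phi.
  by rewrite arr_neq ?mul0mx.
have [f' f'g] := projP boundX boundY surj_g (Defs.Hom homf).
pose z := u *m f' c.
have z0 : z 0 0 = 1.
  move: (f'g c) => /(congr1 (mulmx u)); rewrite /compf /= /f vcast_id mul1mx u_phi.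
  by rewrite mulmxA -colE => /matrixP/(_ 0 0); rewrite !mxE.
have zl : z *m shift_mx k l ^+ l = 0.
  have := hom_pth f' c (vshift l c) l; rewrite pthE vcast_id mulmx1 pathX => f'_pth.
  by rewrite /z -mulmxA f'_pth mulmxA u_l mul0mx.
by have := shift_mx_pow_last z; rewrite zl z0 mxE => /eqP; rewrite eq_sym oner_eq0.
Qed.

Lemma proj_pth_image r : (r <= l)%N -> forall j (u : 'rV[k]_(rdim P j)),
  (forall b, u *m pth P j b (l.+1 - r) = 0) ->
  exists a (y : 'rV[k]_(rdim P a)), u = y *m pth P a j r.
Proof.
elim: r => [_ j u _|r IH lt_rl j u]; first by exists j, u; rewrite pth0 vcast_id mulmx1.
rewrite subSS => u_kill.
have [a [y u_eq]] := IH (ltnW lt_rl) j u (pth_annih_mono (leq_sub2r r (leqnSn l)) u_kill).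
rewrite u_eq.
have [end_a|] := eqVneq (vshift r a) j; last first.
  by move/pth_neq=> ->; exists j, 0; rewrite mulmx0 mul0mx.
have /submxP[Z ->] : (y <= arr P (ord_pred a) a)%MS.
  apply: proj_rad => b; rewrite -(subnKC (ltnW lt_rl)) -(pth_cat _ _ _ end_a) mulmxA.
  by rewrite -u_eq u_kill.
exists (ord_pred a), Z; rewrite -mulmxA -pth1 pth_cat //; exact: ord_predK.
Qed.

End Projective.

Section FactorThroughProjective.
Variables (k : fieldType) (n l : nat) (N M P : rep k n).
Variables (a : Defs.hom N P) (b : Defs.hom P M).
Hypothesis projP : projective l P.

Lemma proj_factor_rad j (v : 'rV[k]_(rdim N j)) :
  (forall c, v *m pth N j c l = 0) -> (v *m a j *m b j <= arr M (ord_pred j) j)%MS.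
Proof.
move=> v_kill; have /submxP[Z ->] : (v *m a j <= arr P (ord_pred j) j)%MS.
  by apply: (proj_rad projP) => c; rewrite -mulmxA hom_pth mulmxA v_kill mul0mx.
by rewrite -mulmxA -hom_arr mulmxA submxMl.
Qed.

Lemma proj_factor_soc h j (v : 'rV[k]_(rdim N j)) : (h <= l)%N ->
  (forall c, pathmx M c h = 0) -> v *m rarr N j = 0 -> v *m a j *m b j = 0.
Proof.
move=> le_hl loewyM v_soc.
have [|c [y ->]] := proj_pth_image projP (leqnn l) (u := v *m a j).
  move=> c; rewrite subSnn pth1 -mulmxA hom_arr mulmxA arrE mulmxA v_soc.
  by rewrite !mul0mx.
by rewrite -mulmxA -hom_pth mulmxA (pth_loewy loewyM) ?mulmx0.
Qed.

End FactorThroughProjective.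

Section StableHomZero.
Variables (k : fieldType) (n l : nat) (M N : rep k n).

Lemma stable_hom_neq0_same_top hM hN i (p : 'rV[k]_(rdim M i)) (q : 'rV[k]_(rdim N i))
    (psiM : 'cV[k]_(rdim M (vshift hM i))) (psiN : 'cV[k]_(rdim N (vshift hN i))) :
  uniserial_data p psiM -> uniserial_data q psiN ->
  (hM <= hN)%N -> (hN < l)%N -> ~ stable_hom_zero l N M.
Proof.
move=> udM udN le_h lt_hl stNM.
have p_kill c : p *m pth M i c hN.+1 = 0 by rewrite (pth_loewy (ud_loewy udM)) ?mulmx0.
have [P [a [b [_ [projP ab]]]]] := stNM (Defs.Hom (uni_mx_is_hom psiN (ud_loewy udN) p_kill)).
have q_kill c : q *m pth N i c l = 0 by rewrite (pth_loewy (ud_loewy udN)) ?mulmx0.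
have := proj_factor_rad a b projP q_kill; move: (ab i); rewrite /compf /= => ab_i.
rewrite -mulmxA ab_i uni_mx_gen; last exact: ud_dual udN.
exact/negP/(ud_gen_notin_rad udM).
Qed.

Lemma stable_hom_neq0_same_soc hM hN iM iN (p : 'rV[k]_(rdim M iM)) (q : 'rV[k]_(rdim N iN))
    (psiM : 'cV[k]_(rdim M (vshift hM iM))) (psiN : 'cV[k]_(rdim N (vshift hN iN))) :
  uniserial_data p psiM -> uniserial_data q psiN ->
  (hM <= hN)%N -> (hN < l)%N -> vshift hM iM = vshift hN iN -> ~ stable_hom_zero l M N.
Proof.
move=> udM udN le_h lt_hl same_soc stMN.
pose d := (hN - hM)%N; have d_hM : (d + hM = hN)%N by rewrite subnK.
have start : vshift d iN = iM by apply: (@vshift_inj _ hM); rewrite -iterD addnC d_hM.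
pose q' := q *m pth N iN iM d.
have q'_kill c : q' *m pth N iM c hM.+1 = 0.
  by rewrite -mulmxA pth_cat // (pth_loewy (ud_loewy udN)) ?mulmx0 // addnS d_hM.
pose F := Defs.Hom (uni_mx_is_hom psiM (ud_loewy udM) q'_kill).
have [P [a [b [_ [projP ab]]]]] := stMN F.
pose u := p *m pth M iM (vshift hM iM) hM.
have u_soc : u *m rarr M (vshift hM iM) = 0.
  by rewrite -mulmxA pth_arr (pth_loewy (ud_loewy udM)) ?mulmx0.
have := proj_factor_soc a b projP lt_hl (ud_loewy udN) u_soc.
move: (ab (vshift hM iM)); rewrite /compf => ab_s.
rewrite -mulmxA ab_s /u -mulmxA -hom_pth /= mulmxA uni_mx_gen; last exact: ud_dual udM.
rewrite /q' -mulmxA pth_cat // d_hM same_soc.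
by move/eqP; apply/negP: (ud_top udN).
Qed.

End StableHomZero.

Theorem lemma2p9 (k : closedFieldType) (n l : nat) (M N : rep k n) :
  bound l M -> bound l N ->
  indecomposable M -> indecomposable N ->
  ~ projective l M -> ~ projective l N ->
  stable_hom_zero l M N -> stable_hom_zero l N M ->
  ~ iso (top M) (top N) /\ ~ iso (soc M) (soc N).
Proof.
move=> boundM boundN indM indN nprojM nprojN stMN stNM.
have [hM [iM [p [psiM udM]]]] := uniserial_data_exists boundM indM.
have [hN [iN [q [psiN udN]]]] := uniserial_data_exists boundN indN.
have lt_hMl : (hM < l)%N by rewrite ltnNge; apply/negP => /(ud_projective udM).
have lt_hNl : (hN < l)%N by rewrite ltnNge; apply/negP => /(ud_projective udN).
split=> /iso_rdim same_dim.
  have same_top : iM = iN.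
    by apply/eqP; rewrite -(ud_top_support udN) -same_dim (ud_top_support udM).
  subst iN; have [le_h|/ltnW le_h] := leqP hM hN.
    exact: stable_hom_neq0_same_top udM udN le_h lt_hNl stNM.
  exact: stable_hom_neq0_same_top udN udM le_h lt_hMl stMN.
have same_soc : vshift hM iM = vshift hN iN.
  by apply/eqP; rewrite -(ud_soc_support udN) -same_dim (ud_soc_support udM).
have [le_h|/ltnW le_h] := leqP hM hN.
  exact: stable_hom_neq0_same_soc udM udN le_h lt_hNl same_soc stMN.
exact: stable_hom_neq0_same_soc udN udM le_h lt_hMl (esym same_soc) stNM.
Qed.
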